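(* Let $F:\mathcal{C}\to\mathcal{D}$ be a Frobenius functor, and let $G:\mathcal{D}\to\mathcal{C}$ be both a left and a right adjoint of $F$. Let $\eta:1_{\mathcal{C}}\to GF$ be the unit of the adjunction in which $F$ is left adjoint to $G$, and $\mu:GF\to 1_{\mathcal{C}}$ the counit of the adjunction in which $G$ is left adjoint to $F$. The following are equivalent: (1) $F$ is naturally full; (2) there exists a natural transformation $\alpha:G\to G$ with $\eta_C\circ\mu_C\circ\alpha_{FC}=\mathrm{id}_{GFC}$ for all $C\in\mathcal{C}$; (3) there exists a natural transformation $\beta:F\to F$ with $\eta_C\circ\mu_C\circ G(\beta_C)=\mathrm{id}_{GFC}$ for all $C\in\mathcal{C}$; (4) there exists a natural transformation $\tilde\alpha:G\to G$ with $\tilde\alpha_{FC}\circ\eta_C\circ\mu_C=\mathrm{id}_{GFC}$ for all $C\in\mathcal{C}$; (5) there exists a natural transformation $\tilde\beta:F\to F$ with $G(\tilde\beta_C)\circ\eta_C\circ\mu_C=\mathrm{id}_{GFC}$ for all $C\in\mathcal{C}$. In this case $\eta_C\circ\mu_C$ is an isomorphism in $\mathcal{C}$ and (for $\alpha,\beta,\tilde\alpha,\tilde\beta$ as in (2)–(5)) $\alpha_{FC}=\tilde\alpha_{FC}=G(\beta_C)=G(\tilde\beta_C)$.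
   Context: A functor is Frobenius if it has a right adjoint which is also a left adjoint. For a functor $F:\mathcal{A}\to\mathcal{B}$, let $\mathcal{F}:\mathrm{Hom}_{\mathcal{A}}(\bullet,\bullet)\to\mathrm{Hom}_{\mathcal{B}}(F(\bullet),F(\bullet))$, $\mathcal{F}_{A,A'}(f)=F(f)$. $F$ is called naturally full if there is a natural transformation $\mathcal{P}:\mathrm{Hom}_{\mathcal{B}}(F(\bullet),F(\bullet))\to\mathrm{Hom}_{\mathcal{A}}(\bullet,\bullet)$ (natural in both variables) such that $F(\mathcal{P}_{A,A'}(u))=u$ for all $u:F(A)\to F(A')$. *)

Set Implicit Arguments.
Unset Strict Implicit.

Record Category := {
  ob :> Type;
  hom : ob -> ob -> Type;
  idm : forall a, hom a a;
  comp : forall a b c, hom b c -> hom a b -> hom a c;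
  comp_id_l : forall a b (f : hom a b), comp (idm b) f = f;
  comp_id_r : forall a b (f : hom a b), comp f (idm a) = f;
  comp_assoc : forall a b c d (h : hom c d) (g : hom b c) (f : hom a b),
      comp h (comp g f) = comp (comp h g) f
}.

Arguments hom {C} a b : rename.
Arguments idm {C} a : rename.
Arguments comp {C a b c} g f : rename.

Declare Scope cat_scope.
Notation "g ∘ f" := (comp g f) (at level 40, left associativity) : cat_scope.
Open Scope cat_scope.

Record Functor (C D : Category) := {
  fobj :> C -> D;
  fmap : forall a b, hom a b -> hom (fobj a) (fobj b);
  fmap_id : forall a, fmap (idm a) = idm (fobj a);
  fmap_comp : forall a b c (g : hom b c) (f : hom a b),
      fmap (g ∘ f) = fmap g ∘ fmap f
}.

Arguments fmap {C D} F {a b} f : rename.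

Record NatTrans (C D : Category) (F G : Functor C D) := {
  component :> forall a : C, hom (F a) (G a);
  naturality : forall a b (f : hom a b),
      fmap G f ∘ component a = component b ∘ fmap F f
}.

Record Adjunction (C D : Category) (F : Functor C D) (G : Functor D C) := {
  adj_unit : forall c : C, hom c (G (F c));
  adj_counit : forall d : D, hom (F (G d)) d;
  adj_unit_nat : forall a b (f : hom a b),
      fmap G (fmap F f) ∘ adj_unit a = adj_unit b ∘ f;
  adj_counit_nat : forall a b (g : hom a b),
      g ∘ adj_counit a = adj_counit b ∘ fmap F (fmap G g);
  adj_triangle_F : forall c : C, adj_counit (F c) ∘ fmap F (adj_unit c) = idm (F c);
  adj_triangle_G : forall d : D, fmap G (adj_counit d) ∘ adj_unit (G d) = idm (G d)
}.

Definition Frobenius (C D : Category) (F : Functor C D) : Prop :=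
  exists G : Functor D C, inhabited (Adjunction F G) /\ inhabited (Adjunction G F).

Definition is_iso (C : Category) (a b : C) (f : hom a b) : Prop :=
  exists g : hom b a, g ∘ f = idm a /\ f ∘ g = idm b.

Definition naturally_full (C D : Category) (F : Functor C D) : Prop :=
  exists P : forall a a' : C, hom (F a) (F a') -> hom a a',
    (forall a a' (u : hom (F a) (F a')), fmap F (P a a' u) = u) /\
    (forall a0 a1 a2 a3 (f : hom a0 a1) (g : hom a2 a3) (u : hom (F a1) (F a2)),
        P a0 a3 (fmap F g ∘ u ∘ fmap F f) = g ∘ P a1 a2 u ∘ f).

From Corelib Require Import ssreflect.

Set Implicit Arguments.
Unset Strict Implicit.

(* Through the adjunction F -| G, a natural section P of f |-> F f is the same
   thing as a natural transformation rho : GF => 1 with eta o rho = 1 (take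
   rho = P(eps_F), and conversely P(u) = rho o G u o eta); through G -| F it is
   the same thing as sigma : 1 => GF with sigma o mu = 1.  By the Yoneda-type
   mate correspondences every transformation GF => 1 is of the form mu o alpha_F
   and of the form mu o G beta, and every transformation 1 => GF is of the form
   alpha'_F o eta and of the form G beta' o eta; this gives (2)-(5).  Finally
   alpha_F is a right and alpha'_F a left inverse of eta o mu, so eta o mu is
   invertible and all these inverses coincide. *)

Definition functor_id (C : Category) : Functor C C :=
  {| fobj a := a; fmap _ _ f := f;
     fmap_id _ := eq_refl; fmap_comp _ _ _ _ _ := eq_refl |}.

Definition functor_comp (C D E : Category) (G : Functor D E) (F : Functor C D) :
  Functor C E.
Proof.
  refine {| fobj a := G (F a); fmap _ _ f := fmap G (fmap F f) |}.
  - by move=> a; rewrite !fmap_id.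
  - by move=> a b c g f; rewrite !fmap_comp.
Defined.

Notation "G ⊙ F" := (functor_comp G F) (at level 40, left associativity).

Lemma naturality_to_id (C D : Category) (F : Functor C D) (G : Functor D C)
  (rho : NatTrans (G ⊙ F) (functor_id C)) a b (f : hom a b) :
  f ∘ rho a = rho b ∘ fmap G (fmap F f).
Proof. exact (naturality rho f). Qed.

Lemma naturality_from_id (C D : Category) (F : Functor C D) (G : Functor D C)
  (sigma : NatTrans (functor_id C) (G ⊙ F)) a b (f : hom a b) :
  fmap G (fmap F f) ∘ sigma a = sigma b ∘ f.
Proof. exact (naturality sigma f). Qed.

Lemma inverses_eq (C : Category) (a b : C) (x : hom a b) (l r : hom b a) :
  l ∘ x = idm a -> x ∘ r = idm b -> r = l.
Proof.
  move=> lx xr.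
  by rewrite -[r]comp_id_l -lx -comp_assoc xr comp_id_r.
Qed.

Lemma is_iso_of_inverses (C : Category) (a b : C) (x : hom a b) (l r : hom b a) :
  l ∘ x = idm a -> x ∘ r = idm b -> is_iso x.
Proof.
  move=> lx xr; exists l; split=> //.
  by rewrite -(inverses_eq lx xr).
Qed.

Section NaturalSection.

Variables (C D : Category) (F : Functor C D).
Variable P : forall a a' : C, hom (F a) (F a') -> hom a a'.
Hypothesis P_natural :
  forall a0 a1 a2 a3 (f : hom a0 a1) (g : hom a2 a3) (u : hom (F a1) (F a2)),
    P (fmap F g ∘ u ∘ fmap F f) = g ∘ P u ∘ f.

Lemma natural_section_postcomp a1 a2 a3 (g : hom a2 a3) (u : hom (F a1) (F a2)) :
  P (fmap F g ∘ u) = g ∘ P u.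
Proof.
  have := P_natural (idm a1) g u.
  by rewrite fmap_id !comp_id_r.
Qed.

Lemma natural_section_precomp a0 a1 a2 (f : hom a0 a1) (u : hom (F a1) (F a2)) :
  P (u ∘ fmap F f) = P u ∘ f.
Proof.
  have := P_natural f (idm a2) u.
  by rewrite fmap_id !comp_id_l.
Qed.

End NaturalSection.

Section AdjunctionFacts.

Variables (C D : Category) (L : Functor C D) (R : Functor D C).
Variable A : Adjunction L R.

Local Notation η := (adj_unit A).
Local Notation ε := (adj_counit A).

Lemma naturally_full_iff_unit_split_epi :
  naturally_full L <->
  exists rho : NatTrans (R ⊙ L) (functor_id C), forall c, η c ∘ rho c = idm (R (L c)).
Proof.
  split.
  - move=> [P [P_sect P_nat]].
    unshelve eexists.
    { exists (fun c => P _ _ (ε (L c))) => a b f /=.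
      rewrite -(natural_section_postcomp P_nat) -(natural_section_precomp P_nat).
      by rewrite adj_counit_nat. }
    move=> c /=.
    by rewrite -adj_unit_nat P_sect adj_triangle_G.
  - move=> [rho rho_sect].
    have L_rho c : fmap L (rho c) = ε (L c).
    { by rewrite -[LHS]comp_id_l -(adj_triangle_F A c) -comp_assoc -fmap_comp rho_sect
        fmap_id comp_id_r. }
    exists (fun a a' u => rho a' ∘ fmap R u ∘ η a); split.
    + move=> a a' u.
      by rewrite !fmap_comp L_rho -adj_counit_nat -comp_assoc adj_triangle_F comp_id_r.
    + move=> a0 a1 a2 a3 f g u.
      by rewrite !fmap_comp -!comp_assoc adj_unit_nat !comp_assoc naturality_to_id.
Qed.

Lemma naturally_full_iff_counit_split_mono :
  naturally_full R <->
  exists sigma : NatTrans (functor_id D) (L ⊙ R), forall d, sigma d ∘ ε d = idm (L (R d)).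
Proof.
  split.
  - move=> [P [P_sect P_nat]].
    unshelve eexists.
    { exists (fun d => P _ _ (η (R d))) => a b g /=.
      rewrite -(natural_section_postcomp P_nat) -(natural_section_precomp P_nat).
      by rewrite adj_unit_nat. }
    move=> d /=.
    by rewrite adj_counit_nat P_sect adj_triangle_F.
  - move=> [sigma sigma_sect].
    have R_sigma d : fmap R (sigma d) = η (R d).
    { by rewrite -[LHS]comp_id_r -(adj_triangle_G A d) comp_assoc -fmap_comp sigma_sect
        fmap_id comp_id_l. }
    exists (fun d d' u => ε d' ∘ fmap L u ∘ sigma d); split.
    + move=> d d' u.
      by rewrite !fmap_comp R_sigma -comp_assoc adj_unit_nat comp_assoc adj_triangle_G comp_id_l.
    + move=> d0 d1 d2 d3 f g u.
      by rewrite !fmap_comp -!comp_assoc naturality_from_id !comp_assoc adj_counit_nat.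
Qed.

Definition counit_mate_left (alpha : NatTrans L L) : NatTrans (L ⊙ R) (functor_id D).
Proof.
  exists (fun d => ε d ∘ alpha (R d)) => a b g /=.
  by rewrite comp_assoc adj_counit_nat -!comp_assoc naturality.
Defined.

Definition counit_mate_right (beta : NatTrans R R) : NatTrans (L ⊙ R) (functor_id D).
Proof.
  exists (fun d => ε d ∘ fmap L (beta d)) => a b g /=.
  by rewrite comp_assoc adj_counit_nat -!comp_assoc -!fmap_comp naturality.
Defined.

Definition unit_mate_right (alpha : NatTrans R R) : NatTrans (functor_id C) (R ⊙ L).
Proof.
  exists (fun c => alpha (L c) ∘ η c) => a b f /=.
  by rewrite comp_assoc naturality -comp_assoc adj_unit_nat comp_assoc.
Defined.

Definition unit_mate_left (beta : NatTrans L L) : NatTrans (functor_id C) (R ⊙ L).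
Proof.
  exists (fun c => fmap R (beta c) ∘ η c) => a b f /=.
  by rewrite comp_assoc -fmap_comp naturality fmap_comp -comp_assoc adj_unit_nat comp_assoc.
Defined.

Lemma counit_mate_left_onto (rho : NatTrans (L ⊙ R) (functor_id D)) :
  exists alpha : NatTrans L L, forall d, counit_mate_left alpha d = rho d.
Proof.
  unshelve eexists.
  { exists (fun c => rho (L c) ∘ fmap L (η c)) => a b f.
    by rewrite comp_assoc naturality_to_id -!comp_assoc -!fmap_comp adj_unit_nat. }
  move=> d /=.
  by rewrite comp_assoc naturality_to_id -comp_assoc -fmap_comp adj_triangle_G fmap_id comp_id_r.
Qed.

Lemma counit_mate_right_onto (rho : NatTrans (L ⊙ R) (functor_id D)) :
  exists beta : NatTrans R R, forall d, counit_mate_right beta d = rho d.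
Proof.
  unshelve eexists.
  { exists (fun d => fmap R (rho d) ∘ η (R d)) => a b g.
    by rewrite comp_assoc -fmap_comp naturality_to_id fmap_comp -!comp_assoc adj_unit_nat. }
  move=> d /=.
  by rewrite fmap_comp comp_assoc -adj_counit_nat -comp_assoc adj_triangle_F comp_id_r.
Qed.

Lemma unit_mate_right_onto (sigma : NatTrans (functor_id C) (R ⊙ L)) :
  exists alpha : NatTrans R R, forall c, unit_mate_right alpha c = sigma c.
Proof.
  unshelve eexists.
  { exists (fun d => fmap R (ε d) ∘ sigma (R d)) => a b g.
    by rewrite -comp_assoc -naturality_from_id !comp_assoc -!fmap_comp adj_counit_nat. }
  move=> c /=.
  by rewrite -comp_assoc -naturality_from_id comp_assoc -fmap_comp adj_triangle_F fmap_id
    comp_id_l.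
Qed.

Lemma unit_mate_left_onto (sigma : NatTrans (functor_id C) (R ⊙ L)) :
  exists beta : NatTrans L L, forall c, unit_mate_left beta c = sigma c.
Proof.
  unshelve eexists.
  { exists (fun c => ε (L c) ∘ fmap L (sigma c)) => a b f.
    by rewrite comp_assoc adj_counit_nat -!comp_assoc -!fmap_comp naturality_from_id. }
  move=> c /=.
  by rewrite fmap_comp -comp_assoc adj_unit_nat comp_assoc adj_triangle_G comp_id_l.
Qed.

End AdjunctionFacts.

Section Frobenius.

Variables (C D : Category) (F : Functor C D) (G : Functor D C).
Variables (FG : Adjunction F G) (GF : Adjunction G F).

Local Notation η := (adj_unit FG).
Local Notation μ := (adj_counit GF).

Lemma naturally_full_iff_unit_counit_right_inverse_G :
  naturally_full F <->
  exists alpha : NatTrans G G, forall c, η c ∘ μ c ∘ alpha (F c) = idm (G (F c)).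
Proof.
  apply: (iff_trans (naturally_full_iff_unit_split_epi FG)); split.
  - move=> [rho rho_sect].
    have [alpha alpha_rho] := counit_mate_left_onto GF rho.
    by exists alpha => c; rewrite -comp_assoc -rho_sect -alpha_rho.
  - move=> [alpha alpha_sect].
    by exists (counit_mate_left GF alpha) => c /=; rewrite comp_assoc.
Qed.

Lemma naturally_full_iff_unit_counit_right_inverse_F :
  naturally_full F <->
  exists beta : NatTrans F F, forall c, η c ∘ μ c ∘ fmap G (beta c) = idm (G (F c)).
Proof.
  apply: (iff_trans (naturally_full_iff_unit_split_epi FG)); split.
  - move=> [rho rho_sect].
    have [beta beta_rho] := counit_mate_right_onto GF rho.
    by exists beta => c; rewrite -comp_assoc -rho_sect -beta_rho.
  - move=> [beta beta_sect].
    by exists (counit_mate_right GF beta) => c /=; rewrite comp_assoc.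
Qed.

Lemma naturally_full_iff_unit_counit_left_inverse_G :
  naturally_full F <->
  exists alpha : NatTrans G G, forall c, alpha (F c) ∘ η c ∘ μ c = idm (G (F c)).
Proof.
  apply: (iff_trans (naturally_full_iff_counit_split_mono GF)); split.
  - move=> [sigma sigma_retr].
    have [alpha alpha_sigma] := unit_mate_right_onto FG sigma.
    by exists alpha => c; rewrite -sigma_retr -alpha_sigma.
  - move=> [alpha alpha_retr].
    by exists (unit_mate_right FG alpha).
Qed.

Lemma naturally_full_iff_unit_counit_left_inverse_F :
  naturally_full F <->
  exists beta : NatTrans F F, forall c, fmap G (beta c) ∘ η c ∘ μ c = idm (G (F c)).
Proof.
  apply: (iff_trans (naturally_full_iff_counit_split_mono GF)); split.
  - move=> [sigma sigma_retr].
    have [beta beta_sigma] := unit_mate_left_onto FG sigma.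
    by exists beta => c; rewrite -sigma_retr -beta_sigma.
  - move=> [beta beta_retr].
    by exists (unit_mate_left FG beta).
Qed.

Lemma unit_counit_inverses_eq c (l r : hom (G (F c)) (G (F c))) :
  l ∘ η c ∘ μ c = idm _ -> η c ∘ μ c ∘ r = idm _ -> r = l.
Proof. by move=> l_left r_right; apply: inverses_eq r_right; rewrite comp_assoc. Qed.

End Frobenius.

Theorem proposition2p7 (C D : Category) (F : Functor C D) (G : Functor D C)
  (FG : Adjunction F G) (GF : Adjunction G F) :
  let eta := adj_unit FG in
  let mu := adj_counit GF in
  (naturally_full F <->
     exists alpha : NatTrans G G, forall c : C,
       eta c ∘ mu c ∘ alpha (F c) = idm (G (F c))) /\
  (naturally_full F <->
     exists beta : NatTrans F F, forall c : C,
       eta c ∘ mu c ∘ fmap G (beta c) = idm (G (F c))) /\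
  (naturally_full F <->
     exists alpha' : NatTrans G G, forall c : C,
       alpha' (F c) ∘ eta c ∘ mu c = idm (G (F c))) /\
  (naturally_full F <->
     exists beta' : NatTrans F F, forall c : C,
       fmap G (beta' c) ∘ eta c ∘ mu c = idm (G (F c))) /\
  (naturally_full F ->
     (forall c : C, is_iso (eta c ∘ mu c)) /\
     (forall (alpha alpha' : NatTrans G G) (beta beta' : NatTrans F F),
        (forall c : C, eta c ∘ mu c ∘ alpha (F c) = idm (G (F c))) ->
        (forall c : C, eta c ∘ mu c ∘ fmap G (beta c) = idm (G (F c))) ->
        (forall c : C, alpha' (F c) ∘ eta c ∘ mu c = idm (G (F c))) ->
        (forall c : C, fmap G (beta' c) ∘ eta c ∘ mu c = idm (G (F c))) ->
        forall c : C,
          alpha (F c) = alpha' (F c) /\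
          alpha (F c) = fmap G (beta c) /\
          alpha (F c) = fmap G (beta' c))).
Proof.
  move=> eta mu; rewrite /eta /mu.
  have nf_iff2 := naturally_full_iff_unit_counit_right_inverse_G FG GF.
  have nf_iff4 := naturally_full_iff_unit_counit_left_inverse_G FG GF.
  split; first exact: nf_iff2.
  split; first exact: naturally_full_iff_unit_counit_right_inverse_F.
  split; first exact: nf_iff4.
  split; first exact: naturally_full_iff_unit_counit_left_inverse_F.
  move=> nf; split.
  - have [alpha alpha_right] := proj1 nf_iff2 nf.
    have [alpha' alpha'_left] := proj1 nf_iff4 nf.
    move=> c; apply: (is_iso_of_inverses _ (alpha_right c)).
    by rewrite comp_assoc; apply: alpha'_left.
  - move=> alpha alpha' beta beta' alpha_right beta_right alpha'_left beta'_left c.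
    rewrite (unit_counit_inverses_eq (alpha'_left c) (beta_right c)).
    split; [|split].
    + exact: unit_counit_inverses_eq (alpha'_left c) (alpha_right c).
    + exact: unit_counit_inverses_eq (alpha'_left c) (alpha_right c).
    + exact: unit_counit_inverses_eq (beta'_left c) (alpha_right c).
Qed.
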